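(* Let $R$ be a ring and $n \geq 3$ an integer. Then the following are equivalent: the direct power $R^n$ is a GSWNC ring; $R^n$ is a GSNC ring; $R$ is strongly nil-clean.
   Context: All rings are associative with identity. An element $a$ of a ring is strongly nil-clean if $a = e + q$ with $e$ idempotent, $q$ nilpotent and $eq = qe$; it is strongly weakly nil-clean if there exist an idempotent $e$ and a nilpotent $q$ with $eq = qe$ such that $a = q + e$ or $a = q - e$. A ring is strongly nil-clean if all its elements are; it is GSNC if every non-invertible element is strongly nil-clean, and GSWNC if every non-invertible element is strongly weakly nil-clean. *)

From HB Require Import structures.
From mathcomp Require Import all_boot all_order all_algebra.
Set Implicit Arguments. Unset Strict Implicit. Unset Printing Implicit Defensive.
Import GRing.Theory.
Local Open Scope ring_scope.

(* Rings: associative with identity (pzRingType; the zero ring is allowed). *)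
Definition idempotentR (R : pzRingType) (e : R) : Prop := e * e = e.
Definition nilpotentR (R : pzRingType) (q : R) : Prop := exists k : nat, q ^+ k = 0.
Definition invertibleR (R : pzRingType) (x : R) : Prop :=
  exists y : R, x * y = 1 /\ y * x = 1.

Definition strongly_nil_clean_elt (R : pzRingType) (a : R) : Prop :=
  exists e q : R, [/\ idempotentR e, nilpotentR q, e * q = q * e & a = e + q].

Definition strongly_weakly_nil_clean_elt (R : pzRingType) (a : R) : Prop :=
  exists e q : R, [/\ idempotentR e, nilpotentR q, e * q = q * e &
                      a = q + e \/ a = q - e].

Definition strongly_nil_clean (R : pzRingType) : Prop :=
  forall a : R, strongly_nil_clean_elt a.

Definition GSNC (R : pzRingType) : Prop :=
  forall a : R, ~ invertibleR a -> strongly_nil_clean_elt a.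

Definition GSWNC (R : pzRingType) : Prop :=
  forall a : R, ~ invertibleR a -> strongly_weakly_nil_clean_elt a.

Definition direct_power (R : pzRingType) (n : nat) : pzRingType := {ffun 'I_n -> R}.

(* If R is strongly nil-clean then so is R^n, coordinatewise.  Conversely,
   q - e = -(e + (-q)), so a non-invertible element of a GSWNC ring is strongly
   nil-clean up to sign, and this survives the coordinate projections
   R^n -> R.  For n >= 3 the non-invertible (1, -1, 0, ...) thus makes -1
   strongly nil-clean in R; -1 = e + q forces (1 + q)(2 + q) = 0, so 2 is
   nilpotent.  Then the non-invertible (a, 0, ...) makes a or -a strongly
   nil-clean, and -a = e + q gives a = e - (q + 2e) with q + 2e nilpotent. *)

From HB Require Import structures.
From mathcomp Require Import all_boot all_order all_algebra.
Set Implicit Arguments. Unset Strict Implicit. Unset Printing Implicit Defensive.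
Import GRing.Theory.
Local Open Scope ring_scope.

Section Nilpotent.
Variable R : pzRingType.
Implicit Types x y : R.

Lemma expr_eq0_leq x m k : x ^+ m = 0 -> (m <= k)%N -> x ^+ k = 0.
Proof. by move=> xm0 le_mk; rewrite -(subnK le_mk) exprD xm0 mulr0. Qed.

Lemma nilpotentN x : nilpotentR x -> nilpotentR (- x).
Proof. by case=> k xk0; exists k; rewrite exprNn xk0 mulr0. Qed.

Lemma nilpotentMr x y : GRing.comm x y -> nilpotentR x -> nilpotentR (x * y).
Proof. by move=> cxy [k xk0]; exists k; rewrite exprMn_comm // xk0 mul0r. Qed.

Lemma nilpotentD x y : GRing.comm x y -> nilpotentR x -> nilpotentR y ->
  nilpotentR (x + y).
Proof.
move=> cxy [m xm0] [k yk0]; exists (m + k)%N; rewrite exprDn_comm //.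
apply: big1 => i _; have [lt_ik | le_ki] := ltnP i k.
  by rewrite (@expr_eq0_leq x m) ?mul0r ?mul0rn // -addnBA ?leq_addr // ltnW.
by rewrite (@expr_eq0_leq y k) ?mulr0 ?mul0rn.
Qed.

End Nilpotent.

Section StronglyNilClean.
Variable R : pzRingType.
Implicit Types a : R.

Lemma snc_elt0 : strongly_nil_clean_elt (0 : R).
Proof.
exists 0, 0; split; rewrite ?addr0 //; first by rewrite /idempotentR mulr0.
by exists 1%N; rewrite expr1.
Qed.

Lemma snc_trivial_ring : (1 : R) = 0 -> strongly_nil_clean R.
Proof. by move=> R10 a; rewrite -[a]mulr1 R10 mulr0; apply: snc_elt0. Qed.

Lemma swnc_eltE a :
  strongly_weakly_nil_clean_elt a <->
  strongly_nil_clean_elt a \/ strongly_nil_clean_elt (- a).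
Proof.
split.
  case=> e [q [idem_e nil_q ceq [a_def | a_def]]].
    by left; exists e, q; split=> //; rewrite addrC.
  right; exists e, (- q); split=> //; first exact: nilpotentN.
    by rewrite mulrN mulNr ceq.
  by rewrite a_def opprB addrC.
case=> -[e [q [idem_e nil_q ceq a_def]]].
  by exists e, q; split=> //; left; rewrite addrC.
exists e, (- q); split=> //; first exact: nilpotentN.
  by rewrite mulrN mulNr ceq.
by right; rewrite -[a]opprK a_def opprD addrC.
Qed.

Lemma snc_eltN1_nilpotent2 : strongly_nil_clean_elt (-1 : R) -> nilpotentR (2 : R).
Proof.
case=> e [q [idem_e nil_q _ N1_def]].
have e_def : e = - (1 + q) by rewrite opprD N1_def addrK.
have : (1 + q) * (2 + q) = 0.
  rewrite -[2]/(1 + 1 : R) -addrA mulrDr mulr1.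
  by rewrite -mulrNN -e_def idem_e e_def addrN.
rewrite mulrDl mul1r -addrA -{1}[q]mulr1 -mulrDr => /eqP.
rewrite addr_eq0 => /eqP ->.
apply/nilpotentN/nilpotentMr => //.
by apply/commrD; [exact: commr1 | apply/commrD; [exact: commr_nat | exact: commr_refl]].
Qed.

Lemma snc_eltN_nilpotent2 a :
  nilpotentR (2 : R) -> strongly_nil_clean_elt (- a) -> strongly_nil_clean_elt a.
Proof.
move=> nil2 [e [q [idem_e nil_q ceq Na_def]]].
have c2e : GRing.comm e 2 := commr_nat e 2.
exists e, (- (q + 2 * e)); split=> //.
- apply/nilpotentN/nilpotentD => //; last by apply: nilpotentMr; first exact/commr_sym.
  by apply/commrM; [exact: commr_nat | exact/commr_sym].
- by apply/commrN/commrD => //; apply/commrM.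
- by rewrite -[a]opprK Na_def mulr_natl mulr2n !opprD addrCA addNKr addrC.
Qed.

End StronglyNilClean.

Lemma rmorph_snc_elt (R S : pzRingType) (f : {rmorphism R -> S}) (a : R) :
  strongly_nil_clean_elt a -> strongly_nil_clean_elt (f a).
Proof.
case=> e [q [idem_e [k qk0] ceq ->]]; exists (f e), (f q); split.
- by rewrite /idempotentR -rmorphM idem_e.
- by exists k; rewrite -rmorphXn qk0 rmorph0.
- by rewrite -!rmorphM ceq.
- exact: rmorphD.
Qed.

Lemma snc_gsnc (R : pzRingType) : strongly_nil_clean R -> GSNC R.
Proof. by move=> sncR a _; apply: sncR. Qed.

Lemma gsnc_gswnc (R : pzRingType) : GSNC R -> GSWNC R.
Proof. by move=> gsncR a /gsncR snc_a; apply/swnc_eltE; left. Qed.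

Section DirectPower.
Variables (R : pzRingType) (n : nat).
Implicit Types f : direct_power R n.

Definition coord (i : 'I_n) f : R := f i.

Fact coord_is_zmod_morphism i : zmod_morphism (coord i).
Proof. by move=> f g; rewrite /coord !ffunE. Qed.

HB.instance Definition _ i :=
  GRing.isZmodMorphism.Build _ _ (coord i) (coord_is_zmod_morphism i).

Fact coord_is_monoid_morphism i : monoid_morphism (coord i).
Proof. by split=> [|f g]; rewrite /coord ffunE. Qed.

HB.instance Definition _ i :=
  GRing.isMonoidMorphism.Build _ _ (coord i) (coord_is_monoid_morphism i).

Lemma nilpotent_direct_power f : (forall i, nilpotentR (f i)) -> nilpotentR f.
Proof.
case/fin_all_exists=> k fk0; exists (\max_i k i); apply/ffunP=> i.
rewrite ffunE -[(f ^+ _) i]/(coord i (f ^+ _)) rmorphXn.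
exact: expr_eq0_leq (fk0 i) (leq_bigmax _).
Qed.

Lemma snc_direct_power : strongly_nil_clean R -> strongly_nil_clean (direct_power R n).
Proof.
move=> sncR f.
have /fin_all_exists[u decomp] : forall i, exists u : R * R,
    [/\ idempotentR u.1, nilpotentR u.2, u.1 * u.2 = u.2 * u.1 & f i = u.1 + u.2].
  by move=> i; have [e [q decomp]] := sncR (f i); exists (e, q).
exists [ffun i => (u i).1], [ffun i => (u i).2]; split.
- by apply/ffunP=> i; rewrite !ffunE; case: (decomp i).
- by apply: nilpotent_direct_power => i; rewrite ffunE; case: (decomp i).
- by apply/ffunP=> i; rewrite !ffunE; case: (decomp i).
- by apply/ffunP=> i; rewrite !ffunE; case: (decomp i).
Qed.

Lemma coord_eq0_noninvertible f i : (1 : R) != 0 -> f i = 0 -> ~ invertibleR f.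
Proof.
move=> R1n0 fi0 [g [fg1 _]]; move/eqP: R1n0; apply.
by rewrite -(rmorph1 (coord i)) -fg1 rmorphM /= /coord fi0 mul0r.
Qed.

Lemma gswnc_direct_power_nilpotent2 : (2 < n)%N -> (1 : R) != 0 ->
  GSWNC (direct_power R n) -> nilpotentR (2 : R).
Proof.
move=> n_gt2 R1n0 gswnc; apply: snc_eltN1_nilpotent2.
pose i0 := Ordinal (ltnW (ltnW n_gt2)); pose i1 := Ordinal (ltnW n_gt2).
pose y : direct_power R n :=
  [ffun i => if val i == 0%N then 1 else if val i == 1%N then -1 else 0].
have y2_0 : y (Ordinal n_gt2) = 0 by rewrite ffunE.
have /swnc_eltE[/(rmorph_snc_elt (coord i1)) | /(rmorph_snc_elt (coord i0))] :=
  gswnc y (coord_eq0_noninvertible R1n0 y2_0).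
  by rewrite /= /coord ffunE.
by rewrite rmorphN /= /coord ffunE.
Qed.

Lemma gswnc_direct_power_snc : (2 < n)%N ->
  GSWNC (direct_power R n) -> strongly_nil_clean R.
Proof.
move=> n_gt2 gswnc a.
have [R10 | R1n0] := eqVneq (1 : R) 0; first exact: snc_trivial_ring.
have nil2 := gswnc_direct_power_nilpotent2 n_gt2 R1n0 gswnc.
pose i0 := Ordinal (ltnW (ltnW n_gt2)).
pose x : direct_power R n := [ffun i => if val i == 0%N then a else 0].
have x1_0 : x (Ordinal (ltnW n_gt2)) = 0 by rewrite ffunE.
have /swnc_eltE[/(rmorph_snc_elt (coord i0)) | /(rmorph_snc_elt (coord i0))] :=
  gswnc x (coord_eq0_noninvertible R1n0 x1_0).
  by rewrite /= /coord ffunE.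
by rewrite rmorphN /= /coord ffunE => /(snc_eltN_nilpotent2 nil2).
Qed.

End DirectPower.

Theorem corollary2p8 (R : pzRingType) (n : nat) (hn : (3 <= n)%N) :
  (GSWNC (direct_power R n) <-> GSNC (direct_power R n)) /\
  (GSNC (direct_power R n) <-> strongly_nil_clean R).
Proof.
have gswnc_snc := @gswnc_direct_power_snc R n hn.
have snc_gsnc_power (sncR : strongly_nil_clean R) :=
  snc_gsnc (@snc_direct_power R n sncR).
split; split.
- by move/gswnc_snc/snc_gsnc_power.
- exact: gsnc_gswnc.
- by move/gsnc_gswnc/gswnc_snc.
- exact: snc_gsnc_power.
Qed.
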